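(* Let $(X_1,\Sigma_1),\dots,(X_N,\Sigma_N)$ be i.i.d. copies of a random pair $(X,\Sigma)$ valued in $\mathcal{X}\times\mathfrak{S}_n$. Suppose that $P_x\in\mathcal{T}$ for all $x\in\mathcal{X}$ and that $$H=\inf_{x\in\mathcal{X}}\min_{i<j}|p_{i,j}(x)-1/2|>0.$$ Let $\mathcal{S}_0$ be a class of measurable maps $\mathcal{X}\to\mathfrak{S}_n$ with finite cardinality $C<+\infty$ that contains the rule $s^*(x)=\sigma^*_{P_x}$. Let $\widehat{s}_N$ be any minimizer over $\mathcal{S}_0$ of $\widehat{\mathcal{R}}_N(s)=\frac1N\sum_{k=1}^N d_\tau(s(X_k),\Sigma_k)$. Then, for any $\delta\in(0,1)$, with probability at least $1-\delta$: $$\mathcal{R}(\widehat{s}_N)-\mathcal{R}^*\le \Big(\frac{n(n-1)}{2H}\Big)\times\frac{\log(C/\delta)}{N}.$$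
   Context: $\mathfrak{S}_n$ is the set of permutations of $\{1,\dots,n\}$. The Kendall $\tau$ distance is $d_\tau(\sigma,\sigma')=\sum_{i<j}\mathbb{I}\{(\sigma(i)-\sigma(j))(\sigma'(i)-\sigma'(j))<0\}$. $P_x$ is the conditional distribution of $\Sigma$ given $X=x$, and $p_{i,j}(x)=\mathbb{P}\{\Sigma(i)<\Sigma(j)\mid X=x\}$. A distribution $P$ on $\mathfrak{S}_n$ with pairwise probabilities $p_{i,j}=\mathbb{P}_{\Sigma\sim P}\{\Sigma(i)<\Sigma(j)\}$ is strictly stochastically transitive if (a) $p_{i,j}\ge1/2$ and $p_{j,k}\ge1/2$ imply $p_{i,k}\ge1/2$ for all $i,j,k$, and (b) $p_{i,j}\neq1/2$ for all $i<j$. $\mathcal{T}$ is the set of such distributions. For $P\in\mathcal{T}$, the unique minimizer $\sigma^*_P$ of $\sigma\mapsto\mathbb{E}_{\Sigma\sim P}[d_\tau(\Sigma,\sigma)]$ is given by $\sigma^*_P(i)=1+\sum_{k\neq i}\mathbb{I}\{p_{i,k}<1/2\}$. The risk is $\mathcal{R}(s)=\mathbb{E}[d_\tau(s(X),\Sigma)]$, and $\mathcal{R}^*$ is its infimum over all measurable $s:\mathcal{X}\to\mathfrak{S}_n$. *)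

From HB Require Import structures.
From mathcomp Require Import all_boot all_order all_algebra all_fingroup.
From mathcomp Require Import all_classical all_reals all_analysis.
Set Implicit Arguments. Unset Strict Implicit. Unset Printing Implicit Defensive.
Import Order.TTheory GRing.Theory Num.Theory.
Local Open Scope classical_set_scope.
Local Open Scope ring_scope.

Definition d_tau (n : nat) (s s' : 'S_n) : nat :=
  \sum_(i < n) \sum_(j < n | (i < j)%N)
     (((((s i)%:Z - (s j)%:Z) * ((s' i)%:Z - (s' j)%:Z)) < 0)%R : nat).

(* A distribution on 'S_n given by its mass function q;
   pairwise probability p_{i,j} = P{Sigma(i) < Sigma(j)}. *)
Definition pairp {R : realType} (n : nat) (q : 'S_n -> R) (i j : 'I_n) : R :=
  \sum_(s : 'S_n | (s i < s j)%N) q s.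

Definition SST {R : realType} (n : nat) (q : 'S_n -> R) : Prop :=
  (forall i j k : 'I_n, pairp q i j >= 1/2 -> pairp q j k >= 1/2 -> pairp q i k >= 1/2)
  /\ (forall i j : 'I_n, (i < j)%N -> pairp q i j != 1/2).

(* min_{i<j} |p_{i,j} - 1/2| (default 1 for the empty min, irrelevant since
   |p - 1/2| <= 1/2). *)
Definition minmargin {R : realType} (n : nat) (q : 'S_n -> R) : R :=
  \big[Order.min/1]_(i < n) \big[Order.min/1]_(j < n | (i < j)%N)
     `|pairp q i j - 1/2|.

Definition measurable_rule {d} {T : measurableType d} (n : nat) (s : T -> 'S_n) : Prop :=
  forall sg : 'S_n, measurable (s @^-1` [set sg]).

(* Risk R(s) = E[d_tau(s(X), Sigma)], where (X,Sigma) has the law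
   mu(dx) P_x(sigma), P_x having mass function p x. *)
Definition risk {d} {T : measurableType d} {R : realType} (n : nat)
  (mu : probability T R) (p : T -> 'S_n -> R) (s : T -> 'S_n) : R :=
  fine (\int[mu]_x (\sum_(sg : 'S_n) p x sg * (d_tau (s x) sg)%:R)%:E)%E.

Definition risk_star {d} {T : measurableType d} {R : realType} (n : nat)
  (mu : probability T R) (p : T -> 'S_n -> R) : R :=
  inf [set risk mu p s | s in [set s : T -> 'S_n | measurable_rule s]].

Definition emp_risk {dO} {Omega : measurableType dO} {T : Type} {R : realType}
  (n N : nat) (X : 'I_N -> Omega -> T) (Sg : 'I_N -> Omega -> 'S_n)
  (w : Omega) (s : T -> 'S_n) : R :=
  (N%:R)^-1 * \sum_(k < N) (d_tau (s (X k w)) (Sg k w))%:R.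

(* p is a measurable family of probability mass functions on 'S_n:
   p x is the mass function of P_x (conditional law of Sigma given X = x). *)
Definition cond_pmf {d} {T : measurableType d} {R : realType} (n : nat)
  (p : T -> 'S_n -> R) : Prop :=
  (forall sg : 'S_n, measurable_fun setT (fun x => p x sg))
  /\ (forall x sg, 0 <= p x sg) /\ (forall x, \sum_(sg : 'S_n) p x sg = 1).

(* (X_k, Sigma_k)_{k<N} are i.i.d. copies of (X, Sigma), whose joint law is
   mu(dx) P_x(sigma): each pair has this law, and the pairs are mutually
   independent (product rule for events {(X_k,Sigma_k) in B_k}, B_k ranging over
   the measurable subsets of T x 'S_n, i.e. B_k = U_sg A_k sg x {sg}). *)
Definition iid_sample {dO d} {Omega : measurableType dO} {T : measurableType d}
  {R : realType} (n N : nat) (P : probability Omega R) (mu : probability T R)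
  (p : T -> 'S_n -> R) (X : 'I_N -> Omega -> T) (Sg : 'I_N -> Omega -> 'S_n) : Prop :=
  (forall k, measurable_fun setT (X k))
  /\ (forall k, measurable_rule (Sg k))
  /\ (forall k (A : set T) (sg : 'S_n), measurable A ->
        P [set w | A (X k w) /\ Sg k w = sg] = (\int[mu]_(x in A) (p x sg)%:E)%E)
  /\ (forall A : 'I_N -> 'S_n -> set T, (forall k sg, measurable (A k sg)) ->
        P (\bigcap_(k in [set: 'I_N]) [set w | A k (Sg k w) (X k w)])
        = (\prod_(k < N) fine (P [set w | A k (Sg k w) (X k w)]))%:E).

From HB Require Import structures.
From mathcomp Require Import all_boot all_order all_algebra all_fingroup.
From mathcomp Require Import all_classical all_reals all_analysis.
From mathcomp Require Import ring lra.
Import Order.TTheory GRing.Theory Num.Theory.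
Set Implicit Arguments. Unset Strict Implicit. Unset Printing Implicit Defensive.
Local Open Scope classical_set_scope.
Local Open Scope ring_scope.

(* The median ranking sigma*_x ranks i before j exactly when p_ij(x) > 1/2.  For
   another ranking s, let m be the number of pairs on which s and sigma* disagree and
   A the number of those on which Sigma sides with sigma*.  Then
   d(s, Sigma) - d(sigma*, Sigma) = 2A - m, and Sigma sides with sigma* on each such
   pair with probability at least 1/2 + H.  Hence s* minimises the risk, and, exp
   being convex in A, the weight exp(lambda (d(sigma*, Sigma) - d(s, Sigma))) with
   lambda = ln(1 + 2H)/M, M = n(n-1)/2, has expectation at most 1 - (H/M) E(s), where
   E(s) = R(s) - R^* is the excess risk.  By independence, s does at least as well as
   s* on the whole sample with probability at most exp(-N (H/M) E(s)); a union bound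
   over the at most C rules with E(s) > (M/H) log(C/delta)/N shows that, with
   probability at least 1 - delta, the empirical risk minimiser is none of them. *)

Section KendallTau.
Variable n : nat.
Implicit Types (s t g : 'S_n) (i j : 'I_n).

Definition ranks_before s i j : bool := (s i < s j)%N.

Lemma perm_nat_neq s i j : i != j -> (s i : nat) != s j.
Proof. by apply: contra => /eqP/val_inj/perm_inj ->. Qed.

Lemma ranks_beforeC s i j : i != j -> ranks_before s j i = ~~ ranks_before s i j.
Proof.
by move=> ij; rewrite /ranks_before ltnNge leq_eqVlt (negbTE (perm_nat_neq s ij)).
Qed.

Lemma d_tauE s t :
  d_tau s t = (\sum_(i < n) \sum_(j < n | (i < j)%N)
                 (ranks_before s i j != ranks_before t i j))%N.
Proof.
apply: eq_bigr => i _; apply: eq_bigr => j ij.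
have diff_neq0 (u : 'S_n) : (u i)%:Z - (u j)%:Z != 0.
  by rewrite subr_eq0 eqz_nat; apply: perm_nat_neq; rewrite neq_ltn ij.
by rewrite neq0_mulr_lt0 ?diff_neq0 // !subr_lt0 !ltz_nat negb_eqb.
Qed.

Definition npairs : nat := (\sum_(i < n) \sum_(j < n | (i < j)%N) 1)%N.

Lemma npairs_double : (npairs * 2 = n * (n - 1))%N.
Proof.
have npairsE : npairs = (\sum_(i < n) \sum_(j < n) (i < j))%N.
  by apply: eq_bigr => i _; rewrite big_mkcond.
have npairsE' : npairs = (\sum_(i < n) \sum_(j < n) (j < i))%N.
  by rewrite npairsE exchange_big.
rewrite muln2 -addnn {1}npairsE npairsE' -big_split /=.
rewrite (eq_bigr (fun _ => n - 1))%N ?sum_nat_const ?card_ord // => i _.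
rewrite -big_split /= (eq_bigr (fun j : 'I_n => (j != i : nat))); last first.
  by move=> j _; rewrite neq_ltn; case: ltngtP.
rewrite (bigD1 i) //= eqxx add0n (eq_bigr (fun _ => 1%N)) => [|j /negbTE -> //].
by rewrite sum1_card cardC1 card_ord subn1.
Qed.

Lemma npairs_gt0 : (1 < n)%N -> (0 < npairs)%N.
Proof.
by move=> n_gt1; rewrite -(ltn_pmul2r (isT : 0 < 2)%N) npairs_double muln_gt0 subn_gt0 ltnW.
Qed.

Lemma d_tau_le_npairs s t : (d_tau s t <= npairs)%N.
Proof. by rewrite d_tauE; apply: leq_sum => i _; apply: leq_sum => j _; exact: leq_b1. Qed.

Lemma d_tau_eq0 s t : (n <= 1)%N -> d_tau s t = 0%N.
Proof.
move=> n_le1; have : (npairs * 2 == 0)%N.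
  by rewrite npairs_double muln_eq0 subn_eq0 n_le1 orbT.
rewrite muln_eq0 orbF => /eqP npairs0.
by apply/eqP; rewrite -leqn0 -npairs0 d_tau_le_npairs.
Qed.

Definition nprefer t s g : nat :=
  \sum_(i < n) \sum_(j < n | (i < j)%N)
     ((ranks_before s i j != ranks_before t i j)
      && (ranks_before g i j == ranks_before t i j)).

Lemma d_tau_split t s g : (d_tau s g + d_tau s t = d_tau t g + 2 * nprefer t s g)%N.
Proof.
rewrite !d_tauE mul2n -addnn /nprefer -!big_split /=; apply: eq_bigr => i _.
rewrite -!big_split /=; apply: eq_bigr => j _.
by case: (ranks_before s i j); case: (ranks_before t i j); case: (ranks_before g i j).
Qed.

Lemma d_tau_subE (R : pzRingType) t s g :
  (d_tau s g)%:R - (d_tau t g)%:R = 2 * (nprefer t s g)%:R - (d_tau s t)%:R :> R.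
Proof.
have := congr1 (GRing.natmul (1 : R)) (d_tau_split t s g); rewrite 2!natrD natrM => split_R.
by apply/eqP; rewrite subr_eq addrAC eq_sym subr_eq eq_sym split_R addrC.
Qed.

Lemma nprefer_le t s g : (nprefer t s g <= d_tau s t)%N.
Proof.
rewrite d_tauE; apply: leq_sum => i _; apply: leq_sum => j _.
by case: (_ != _); case: (_ == _).
Qed.

End KendallTau.

Section ExpChords.
Variable R : realType.
Implicit Types a b c m t : R.

Lemma expR_chord a b t : 0 <= t <= 1 ->
  expR ((1 - t) * a + t * b) <= (1 - t) * expR a + t * expR b.
Proof.
move=> /andP[t_ge0 t_le1]; have := convex_expR (Itv01 t_ge0 t_le1) b a.
by rewrite !convRE /= [_ + t * b]addrC [_ + t * expR b]addrC.
Qed.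

Lemma expR_chord_sym c m a : 0 < m -> 0 <= a <= m ->
  expR (c * (m - 2 * a)) <= (1 - a / m) * expR (c * m) + a / m * expR (- (c * m)).
Proof.
move=> m_gt0 /andP[a_ge0 a_le_m].
have t01 : 0 <= a / m <= 1.
  by rewrite divr_ge0 ?(ltW m_gt0) //= ler_pdivrMr // mul1r.
have -> : c * (m - 2 * a) = (1 - a / m) * (c * m) + a / m * (- (c * m)).
  by field; rewrite gt_eqF.
exact: expR_chord.
Qed.

Lemma expect_expR_chord_sym (I : finType) (q : I -> R) (A : I -> R) c m :
  (forall i, 0 <= q i) -> \sum_i q i = 1 -> 0 < m -> (forall i, 0 <= A i <= m) ->
  \sum_i q i * expR (c * (m - 2 * A i))
  <= (1 - (\sum_i q i * A i) / m) * expR (c * m) + (\sum_i q i * A i) / m * expR (- (c * m)).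
Proof.
move=> q_ge0 q_sum1 m_gt0 A_bnd.
set eU := expR (c * m); set eD := expR (- (c * m)).
have -> : (1 - (\sum_i q i * A i) / m) * eU + (\sum_i q i * A i) / m * eD
    = \sum_i q i * ((1 - A i / m) * eU + A i / m * eD).
  rewrite [RHS](eq_bigr (fun i => q i * eU + q i * A i * ((eD - eU) / m))) => [|i _].
    by rewrite big_split -!mulr_suml q_sum1 /=; ring.
  by ring.
by apply: ler_sum => i _; rewrite ler_wpM2l // expR_chord_sym.
Qed.

Lemma chernoff_mix_le (H u r : R) : 0 < H -> 0 <= u <= 1 -> 1/2 + H <= r <= 1 ->
  (1 - r) * expR (u * ln (1 + 2 * H)) + r * expR (- (u * ln (1 + 2 * H)))
  <= 1 - H * u * (2 * r - 1).
Proof.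
move=> H_gt0 u01 /andP[r_ge r_le1].
have expL : expR (ln (1 + 2 * H)) = 1 + 2 * H by rewrite lnK // posrE; lra.
have up : expR (u * ln (1 + 2 * H)) <= 1 + u * (2 * H).
  by have := expR_chord 0 (ln (1 + 2 * H)) u01; rewrite expR0 mulr0 add0r expL; lra.
have down : expR (- (u * ln (1 + 2 * H))) <= 1 + u * ((1 + 2 * H)^-1 - 1).
  have := expR_chord 0 (- ln (1 + 2 * H)) u01.
  by rewrite expR0 mulr0 add0r expRN expL mulrN; lra.
set k := (1 + 2 * H)^-1 in down *.
have k_inv : k * (1 + 2 * H) = 1 by rewrite mulVf // gt_eqF //; lra.
have k_ge0 : 0 <= k by rewrite invr_ge0; lra.
have mix : (1 - r) * expR (u * ln (1 + 2 * H)) + r * expR (- (u * ln (1 + 2 * H)))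
           <= (1 - r) * (1 + u * (2 * H)) + r * (1 + u * (k - 1)).
  by apply: lerD; apply: ler_wpM2l => //; lra.
have margin : 0 <= u * H * (2 * k * r - 1).
  apply: mulr_ge0; first by apply: mulr_ge0; lra.
  have : k * (1 + 2 * H) <= k * (2 * r) by apply: ler_wpM2l => //; lra.
  by rewrite k_inv; lra.
have k_ur : u * r * (k * (1 + 2 * H)) = u * r by rewrite k_inv mulr1.
lra.
Qed.

End ExpChords.

Section MedianRanking.
Variables (R : realType) (n : nat) (q : 'S_n -> R).
Hypothesis q_ge0 : forall g, 0 <= q g.
Hypothesis q_sum1 : \sum_g q g = 1.
Implicit Types (i j : 'I_n).

Lemma pairpC i j : i != j -> pairp q j i = 1 - pairp q i j.
Proof.
move=> ij; rewrite -q_sum1 (bigID (fun g : 'S_n => ranks_before g i j)) /= addrC addrK.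
by apply: eq_bigl => g; rewrite -[(g j < g i)%N]/(ranks_before g j i) ranks_beforeC.
Qed.

Lemma sum_ranks_before_eq i j b : i != j ->
  \sum_g q g * (ranks_before g i j == b)%:R = if b then pairp q i j else pairp q j i.
Proof.
move=> ij; case: b; rewrite /pairp [RHS]big_mkcond /=; apply: eq_bigr => g _.
  by rewrite -[(g i < g j)%N]/(ranks_before g i j); case: ranks_before; rewrite ?mulr1 ?mulr0.
rewrite -[(g j < g i)%N]/(ranks_before g j i) (ranks_beforeC g ij).
by case: ranks_before; rewrite ?mulr1 ?mulr0.
Qed.

Hypothesis q_sst : SST q.

Lemma pairp_neq_half i j : i != j -> pairp q i j != 1/2.
Proof.
move=> ij; case: (ltngtP i j) => [lt_ij|lt_ji|/val_inj eq_ij]; first exact: q_sst.2.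
- rewrite (@pairpC j i) 1?eq_sym //.
  by apply: contra (q_sst.2 _ _ lt_ji) => /eqP eq_half; apply/eqP; lra.
- by rewrite eq_ij eqxx in ij.
Qed.

Variable sg : 'S_n.
Hypothesis sgE : forall i,
  (sg i : nat) = #|[pred k : 'I_n | (k != i) && (pairp q i k < 1/2)]|.

Lemma median_rank_lt i j : i != j -> 1/2 < pairp q i j -> (sg i < sg j)%N.
Proof.
move=> ij gt_ij; rewrite !sgE; apply: proper_card; apply/properP; split.
  apply/fintype.subsetP => k; rewrite !inE => /andP[ki lt_ik].
  have kj : k != j by apply: contraTneq lt_ik => ->; rewrite -leNgt ltW.
  have gt_ki : 1/2 < pairp q k i by rewrite pairpC 1?eq_sym //; lra.
  have ge_kj : 1/2 <= pairp q k j by apply: q_sst.1 (ltW gt_ki) (ltW gt_ij).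
  have gt_kj : 1/2 < pairp q k j by rewrite lt_neqAle ge_kj eq_sym pairp_neq_half.
  by rewrite kj /= pairpC //; lra.
by exists i; rewrite !inE ?eqxx // ij /= pairpC //; lra.
Qed.

Lemma ranks_before_median i j : i != j -> ranks_before sg i j = (1/2 < pairp q i j).
Proof.
move=> ij; have [gt_ij|le_ij] := ltP (1/2) (pairp q i j).
  exact: median_rank_lt.
have lt_ij : pairp q i j < 1/2 by rewrite lt_neqAle le_ij pairp_neq_half.
have : (sg j < sg i)%N by apply: median_rank_lt; rewrite 1?eq_sym // pairpC //; lra.
by move/ltnW; rewrite /ranks_before ltnNge => ->.
Qed.

Variable H : R.
Hypothesis H_le : forall i j, (i < j)%N -> H <= `|pairp q i j - 1/2|.

Lemma prob_agree_median i j : (i < j)%N ->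
  1/2 + H <= \sum_g q g * (ranks_before g i j == ranks_before sg i j)%:R.
Proof.
move=> lt_ij; have ij : i != j by rewrite neq_ltn lt_ij.
have := H_le lt_ij; rewrite sum_ranks_before_eq // ranks_before_median //.
case: ltP => [gt_ij|le_ij]; first by rewrite ger0_norm; lra.
by rewrite (pairpC ij) ler0_norm; lra.
Qed.

Variable s : 'S_n.

Lemma expect_nprefer_ge :
  (d_tau s sg)%:R * (1/2 + H) <= \sum_g q g * (nprefer sg s g)%:R.
Proof.
under eq_bigr do rewrite /nprefer natr_sum big_distrr /=.
rewrite d_tauE natr_sum big_distrl exchange_big /=; apply: ler_sum => i _.
rewrite natr_sum big_distrl /=.
under [leRHS]eq_bigr do rewrite natr_sum big_distrr /=.
rewrite [leRHS]exchange_big /=; apply: ler_sum => j lt_ij.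
under eq_bigr do rewrite -mulnb natrM mulrCA.
rewrite -big_distrr /=; apply: ler_wpM2l; first exact: ler0n.
exact: prob_agree_median.
Qed.

Lemma expect_nprefer_le : \sum_g q g * (nprefer sg s g)%:R <= (d_tau s sg)%:R.
Proof.
apply: (le_trans (y := \sum_g q g * (d_tau s sg)%:R)).
  by apply: ler_sum => g _; apply: ler_wpM2l => //; rewrite ler_nat nprefer_le.
by rewrite -mulr_suml q_sum1 mul1r.
Qed.

Lemma expect_excess :
  \sum_g q g * ((d_tau s g)%:R - (d_tau sg g)%:R)
  = 2 * \sum_g q g * (nprefer sg s g)%:R - (d_tau s sg)%:R.
Proof.
under eq_bigr do rewrite d_tau_subE mulrBr mulrCA.
by rewrite sumrB -mulr_suml q_sum1 mul1r -mulr_sumr.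
Qed.

Lemma median_excess_ge :
  2 * H * (d_tau s sg)%:R <= \sum_g q g * ((d_tau s g)%:R - (d_tau sg g)%:R).
Proof. by rewrite expect_excess; have := expect_nprefer_ge; lra. Qed.

Hypothesis H_gt0 : 0 < H.
Variable M : nat.
Hypothesis M_gt0 : (0 < M)%N.
Hypothesis d_tau_le_M : (d_tau s sg <= M)%N.

Lemma median_mgf_le :
  \sum_g q g * expR (ln (1 + 2 * H) / M%:R * ((d_tau sg g)%:R - (d_tau s g)%:R))
  <= 1 - H / M%:R * \sum_g q g * ((d_tau s g)%:R - (d_tau sg g)%:R).
Proof.
rewrite expect_excess.
set m : R := (d_tau s sg)%:R; set EA := \sum_g q g * (nprefer sg s g)%:R.
have excess_g g : (d_tau sg g)%:R - (d_tau s g)%:R = m - 2 * (nprefer sg s g)%:R :> R.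
  by rewrite -opprB d_tau_subE opprB.
under eq_bigr do rewrite excess_g.
have [m_eq0|m_neq0] := eqVneq (d_tau s sg) 0%N.
  have nprefer0 g : nprefer sg s g = 0%N by apply/eqP; rewrite -leqn0 -m_eq0 nprefer_le.
  under eq_bigr do rewrite nprefer0 /m m_eq0 mulr0 subrr mulr0 expR0 mulr1.
  rewrite q_sum1 /EA big1 => [|g _]; last by rewrite nprefer0 mulr0.
  by rewrite /m m_eq0 mulr0 subrr mulr0 subr0.
have m_gt0 : 0 < m by rewrite ltr0n lt0n.
have A_bnd g : (0 : R) <= (nprefer sg s g)%:R <= m by rewrite ler0n ler_nat nprefer_le.
apply: le_trans (expect_expR_chord_sym (ln (1 + 2 * H) / M%:R) q_ge0 q_sum1 m_gt0 A_bnd) _.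
have u01 : 0 <= m / M%:R <= 1.
  by rewrite divr_ge0 ?(ltW m_gt0) ?ler0n //= ler_pdivrMr ?ltr0n // mul1r ler_nat.
have r_bnd : 1/2 + H <= EA / m <= 1.
  rewrite ler_pdivlMr // ler_pdivrMr // mulrC [_ * m]mulrC mulr1.
  by rewrite expect_nprefer_ge // expect_nprefer_le.
have -> : ln (1 + 2 * H) / M%:R * m = m / M%:R * ln (1 + 2 * H) by ring.
have -> : 1 - H / M%:R * (2 * EA - m) = 1 - H * (m / M%:R) * (2 * (EA / m) - 1).
  by field; rewrite (gt_eqF m_gt0) gt_eqF ?ltr0n.
exact: chernoff_mix_le.
Qed.

End MedianRanking.

Lemma measurable_fun_finite (R : realType) d (T : measurableType d) (K : finType)
    (t : T -> K) (F : K -> R) :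
  (forall k, measurable (t @^-1` [set k])) -> measurable_fun setT (F \o t).
Proof.
move=> t_meas _ Y _; rewrite setTI.
have -> : (F \o t) @^-1` Y = \bigcup_(k in [set k | Y (F k)]) t @^-1` [set k].
  by apply/seteqP; split => [x Yx|x [k Yk /= ->]] //; exists (t x).
by apply: fin_bigcup_measurable => //; exact: finite_finset.
Qed.

(* Every expectation of a function of (s1 X, s2 X, Sigma) is a finite sum against the
   joint law [joint_pmf] of this triple. *)
Notation triple n := ('S_n * 'S_n * 'S_n)%type.

Section JointLaw.
Context (R : realType) (n : nat) (d : measure_display) (T : measurableType d).
Variables (mu : probability T R) (p : T -> 'S_n -> R).
Hypothesis p_pmf : cond_pmf p.
Variables (s1 s2 : T -> 'S_n).
Hypotheses (s1_meas : measurable_rule s1) (s2_meas : measurable_rule s2).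

Definition cond_expect (Phi : triple n -> R) (x : T) : R :=
  \sum_g p x g * Phi (s1 x, s2 x, g).

Definition joint_expect (Phi : triple n -> R) : R :=
  Rintegral mu setT (cond_expect Phi).

Lemma cond_expect_integrable Phi : mu.-integrable setT (EFin \o cond_expect Phi).
Proof.
have [p_meas [p_ge0 p_sum1]] := p_pmf.
have pair_meas (k : 'S_n * 'S_n) : measurable ((fun x => (s1 x, s2 x)) @^-1` [set k]).
  case: k => a b; rewrite (_ : _ @^-1` _ = s1 @^-1` [set a] `&` s2 @^-1` [set b]).
    exact: measurableI.
  by apply/seteqP; split => x /= [-> ->].
apply: measurable_bounded_integrable => //.
  by apply: (@le_lt_trans _ _ 1%E); [exact: probability_le1 | exact: ltry].
  apply: measurable_sum => g; apply: measurable_realfun.measurable_funM => //.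
  exact: (measurable_fun_finite (fun k => Phi (k.1, k.2, g)) pair_meas).
set K := \sum_v `|Phi v|.
have Phi_le u : `|Phi u| <= K by rewrite /K (bigD1 u) //= lerDl sumr_ge0.
rewrite /bounded_near; near=> B => x _ /=.
have KB : K <= B by near: B; apply: nbhs_pinfty_ge; exact: num_real.
apply: le_trans KB; apply: le_trans (ler_norm_sum _ _ _) _.
rewrite -[K]mul1r -(p_sum1 x) mulr_suml; apply: ler_sum => g _.
by rewrite normrM ger0_norm // ler_wpM2l.
Unshelve. all: end_near.
Qed.

Lemma joint_expect_le Phi1 Phi2 :
  (forall x, cond_expect Phi1 x <= cond_expect Phi2 x) ->
  joint_expect Phi1 <= joint_expect Phi2.
Proof.
move=> le12; apply: le_Rintegral => //; try exact: cond_expect_integrable.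
by move=> x _; exact: le12.
Qed.

Lemma joint_expect_cst c : joint_expect (fun _ => c) = c.
Proof.
have [_ [_ p_sum1]] := p_pmf.
transitivity (Rintegral mu setT (fun _ => c)).
  by apply: eq_Rintegral => x _; rewrite /cond_expect -mulr_suml p_sum1 mul1r.
have mu_setT : fine (mu setT) = 1.
  by rewrite -[RHS]/(fine 1%E); congr fine; exact: probability_setT.
by rewrite Rintegral_cst // mu_setT mulr1.
Qed.

Lemma joint_expectZ c Phi :
  joint_expect (fun v => c * Phi v) = c * joint_expect Phi.
Proof.
rewrite /joint_expect -RintegralZl //; last exact: cond_expect_integrable.
apply: eq_Rintegral => x _; rewrite /cond_expect mulr_sumr.
by apply: eq_bigr => g _; rewrite mulrCA.
Qed.

Lemma joint_expectD Phi1 Phi2 :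
  joint_expect (fun v => Phi1 v + Phi2 v) = joint_expect Phi1 + joint_expect Phi2.
Proof.
rewrite /joint_expect -RintegralD //; try exact: cond_expect_integrable.
apply: eq_Rintegral => x _; rewrite /cond_expect -big_split /=.
by apply: eq_bigr => g _; rewrite mulrDr.
Qed.

Lemma joint_expect_sum (I : Type) (r : seq I) (F : I -> triple n -> R) :
  joint_expect (fun v => \sum_(i <- r) F i v) = \sum_(i <- r) joint_expect (F i).
Proof.
elim: r => [|i r IH].
  by under eq_fun do rewrite big_nil; rewrite joint_expect_cst big_nil.
by under eq_fun do rewrite big_cons; rewrite joint_expectD IH big_cons.
Qed.

Definition joint_pmf (v : triple n) : R := joint_expect (fun u => (u == v)%:R).

Lemma joint_expectE Phi : joint_expect Phi = \sum_v joint_pmf v * Phi v.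
Proof.
have PhiE : Phi = fun u => \sum_v Phi v * (u == v)%:R.
  apply/funext => u; rewrite (bigD1 u) //= eqxx mulr1 big1 ?addr0 // => v.
  by rewrite eq_sym => /negbTE ->; rewrite mulr0.
rewrite {1}PhiE joint_expect_sum; apply: eq_bigr => v _.
by rewrite joint_expectZ mulrC.
Qed.

Lemma joint_pmf_ge0 v : 0 <= joint_pmf v.
Proof.
have [_ [p_ge0 _]] := p_pmf.
by apply: Rintegral_ge0 => x _; apply: sumr_ge0 => g _; rewrite mulr_ge0.
Qed.

Lemma joint_pmf_sum1 : \sum_v joint_pmf v = 1.
Proof.
by rewrite -[RHS](joint_expect_cst 1) joint_expectE; under [RHS]eq_bigr do rewrite mulr1.
Qed.

End JointLaw.

Section MedianRule.
Context (R : realType) (n : nat) (d : measure_display) (T : measurableType d).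
Variables (mu : probability T R) (p : T -> 'S_n -> R).
Hypothesis p_pmf : cond_pmf p.
Hypothesis p_sst : forall x, SST (p x).
Variable sstar : T -> 'S_n.
Hypothesis sstar_meas : measurable_rule sstar.
Hypothesis sstarE : forall x (i : 'I_n),
  (sstar x i : nat) = #|[pred k : 'I_n | (k != i) && (pairp (p x) i k < 1/2)]|.
Variable s : T -> 'S_n.
Hypothesis s_meas : measurable_rule s.

Local Notation rho := (joint_pmf mu p s sstar).

Lemma risk_diffE : risk mu p s - risk mu p sstar
  = \sum_v rho v * ((d_tau v.1.1 v.2)%:R - (d_tau v.1.2 v.2)%:R).
Proof.
have -> : risk mu p s = joint_expect mu p s sstar (fun v => (d_tau v.1.1 v.2)%:R) by [].
have -> : risk mu p sstar = joint_expect mu p s sstar (fun v => (d_tau v.1.2 v.2)%:R).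
  by [].
by rewrite !joint_expectE // -sumrB; under [RHS]eq_bigr do rewrite mulrBr.
Qed.

Lemma risk_median_le : risk mu p sstar <= risk mu p s.
Proof.
have [_ [p_ge0 p_sum1]] := p_pmf.
rewrite -subr_ge0 risk_diffE -joint_expectE // -(joint_expect_cst mu p_pmf s sstar 0).
apply: joint_expect_le => // x; rewrite /cond_expect /= big1 => [|g _]; last by rewrite mulr0.
have := median_excess_ge (p_sum1 x) (p_sst x) (sstarE x)
  (fun i j _ => normr_ge0 (pairp (p x) i j - 1/2)) (s x).
by rewrite mulr0 mul0r.
Qed.

Variable H : R.
Hypothesis H_gt0 : 0 < H.
Hypothesis H_le : forall x (i j : 'I_n), (i < j)%N -> H <= `|pairp (p x) i j - 1/2|.
Hypothesis n_gt1 : (1 < n)%N.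

Definition mgf_weight (v : triple n) : R :=
  expR (ln (1 + 2 * H) / (npairs n)%:R * ((d_tau v.1.2 v.2)%:R - (d_tau v.1.1 v.2)%:R)).

Lemma joint_mgf_le :
  \sum_v rho v * mgf_weight v <= 1 - H / (npairs n)%:R * (risk mu p s - risk mu p sstar).
Proof.
have [_ [p_ge0 p_sum1]] := p_pmf.
set c := H / (npairs n)%:R.
have -> : 1 - c * (risk mu p s - risk mu p sstar)
    = \sum_v rho v * (1 - c * ((d_tau v.1.1 v.2)%:R - (d_tau v.1.2 v.2)%:R)).
  under eq_bigr do rewrite mulrBr mulr1 mulrCA.
  by rewrite sumrB joint_pmf_sum1 // -mulr_sumr risk_diffE.
rewrite -!joint_expectE //; apply: joint_expect_le => // x; rewrite /cond_expect /=.
have -> : \sum_g p x g * (1 - c * ((d_tau (s x) g)%:R - (d_tau (sstar x) g)%:R))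
    = 1 - c * \sum_g p x g * ((d_tau (s x) g)%:R - (d_tau (sstar x) g)%:R).
  under eq_bigr do rewrite mulrBr mulr1 mulrCA.
  by rewrite sumrB p_sum1 -mulr_sumr.
exact (median_mgf_le (p_ge0 x) (p_sum1 x) (p_sst x) (sstarE x) (H_le x) H_gt0
  (npairs_gt0 n_gt1) (d_tau_le_npairs (s x) (sstar x))).
Qed.

End MedianRule.

Lemma risk_starE (R : realType) n d (T : measurableType d) (mu : probability T R)
    (p : T -> 'S_n -> R) (sstar : T -> 'S_n) :
  cond_pmf p -> (forall x, SST (p x)) -> measurable_rule sstar ->
  (forall x (i : 'I_n),
    (sstar x i : nat) = #|[pred k : 'I_n | (k != i) && (pairp (p x) i k < 1/2)]|) ->
  risk_star mu p = risk mu p sstar.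
Proof.
move=> p_pmf p_sst sstar_meas sstarE; apply/eqP; rewrite eq_le; apply/andP; split.
  by apply: ge_inf; [exists (risk mu p sstar) => _ [s s_meas <-] | exists sstar];
    rewrite // risk_median_le.
apply: lb_le_inf; first by exists (risk mu p sstar), sstar.
by move=> _ [s s_meas <-]; exact: risk_median_le.
Qed.

Lemma risk_eq0 (R : realType) n d (T : measurableType d) (mu : probability T R)
    (p : T -> 'S_n -> R) (s : T -> 'S_n) :
  (n <= 1)%N -> risk mu p s = 0.
Proof.
move=> n_le1; transitivity (Rintegral mu setT (fun _ => 0)); last first.
  by rewrite Rintegral_cst // mul0r.
apply: eq_Rintegral => x _; rewrite big1 // => g _.
by rewrite d_tau_eq0 // mulr0.
Qed.

Lemma measure_bigsetU_le d (T : measurableType d) (R : realType)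
    (P : {measure set T -> \bar R}) (I : Type) (r : seq I) (Q : pred I) (F : I -> set T) :
  (forall i, measurable (F i)) ->
  (P (\big[setU/set0]_(i <- r | Q i) F i) <= \sum_(i <- r | Q i) P (F i))%E.
Proof.
move=> F_meas; elim: r => [|i r IH]; first by rewrite !big_nil measure0.
rewrite !big_cons; case: ifP => // _.
apply: le_trans (measureU2 _ _ _) (leeD _ IH) => //.
exact: bigsetU_measurable.
Qed.

Lemma probability_setC_bigsetU_ge (R : realType) d (T : measurableType d)
    (P : probability T R) (I : finType) (Q : pred I) (F : I -> set T) (eps : R) :
  0 <= eps -> (forall i, measurable (F i)) -> (forall i, Q i -> (P (F i) <= eps%:E)%E) ->
  ((1 - #|I|%:R * eps)%:E <= P (~` \big[setU/set0]_(i | Q i) F i))%E.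
Proof.
move=> eps_ge0 F_meas F_le.
have U_meas : measurable (\big[setU/set0]_(i | Q i) F i).
  by apply: bigsetU_measurable => i _; exact: F_meas.
rewrite probability_setC // -[P _]fineK ?fin_num_measure // -EFinB lee_fin lerB //.
rewrite -lee_fin fineK ?fin_num_measure //.
apply: le_trans (measure_bigsetU_le _ _ _ F_meas) _.
apply: (le_trans (y := (\sum_(i | Q i) eps%:E)%E)); first by apply: lee_sum; exact: F_le.
rewrite sumEFin lee_fin sumr_const mulrC mulr_natr.
by apply: ler_wpMn2l => //; exact: max_card.
Qed.

Section SampleChernoff.
Context (R : realType) (n N : nat) (dO : measure_display) (Omega : measurableType dO).
Variable P : probability Omega R.
Context (d : measure_display) (T : measurableType d).
Variables (mu : probability T R) (p : T -> 'S_n -> R).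
Variables (X : 'I_N -> Omega -> T) (Sg : 'I_N -> Omega -> 'S_n).
Hypothesis p_pmf : cond_pmf p.
Hypothesis sample_iid : iid_sample P mu p X Sg.
Variables (s sstar : T -> 'S_n).
Hypotheses (s_meas : measurable_rule s) (sstar_meas : measurable_rule sstar).

Local Notation rho := (joint_pmf mu p s sstar).

Definition sample_triple (k : 'I_N) (w : Omega) : triple n :=
  (s (X k w), sstar (X k w), Sg k w).

Definition triple_event (k : 'I_N) (v : triple n) : set Omega :=
  [set w | sample_triple k w = v].

Lemma triple_event_prob k v : P (triple_event k v) = (rho v)%:E.
Proof.
have [_ [_ [law_k _]]] := sample_iid.
case: v => [[a b] h]; pose A := [set x | s x = a /\ sstar x = b].
have A_meas : measurable A by apply: measurableI (s_meas _) (sstar_meas _).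
have -> : triple_event k (a, b, h) = [set w | A (X k w) /\ Sg k w = h].
  apply/seteqP; split => w; rewrite /triple_event /sample_triple /A /=.
    by case=> -> -> ->.
  by case=> [[-> ->] ->].
rewrite law_k // integral_mkcond /joint_pmf /joint_expect /Rintegral fineK; last first.
  by apply: integrable_fin_num => //; exact: cond_expect_integrable.
apply: eq_integral => x _; rewrite /restrict /cond_expect.
case: ifPn => [/set_mem [-> ->]|x_notin_A].
  rewrite (bigD1 h) //= eqxx mulr1 big1 ?addr0 // => g g_neq.
  by rewrite xpair_eqE (negbTE g_neq) andbF mulr0.
rewrite big1 // => g _; rewrite !xpair_eqE.
case: eqP => [s_x|]; case: eqP => [sstar_x|] //=; rewrite ?andbF ?mulr0 //.
by case/negP: x_notin_A; apply/mem_set.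
Qed.

Lemma triple_event_measurable k v : measurable (triple_event k v).
Proof.
have [X_meas [Sg_meas _]] := sample_iid.
case: v => [[a b] h].
have -> : triple_event k (a, b, h)
    = Sg k @^-1` [set h] `&` (setT `&` X k @^-1` (s @^-1` [set a] `&` sstar @^-1` [set b])).
  by apply/seteqP; split => w; rewrite /triple_event /sample_triple /=;
    [case=> -> -> -> | case=> -> [_ [-> ->]]].
apply: measurableI; first exact: Sg_meas.
by apply: X_meas => //; apply: measurableI.
Qed.

Lemma triple_events_prob (z : {ffun 'I_N -> triple n}) :
  P (\bigcap_(k in [set: 'I_N]) triple_event k (z k)) = (\prod_k rho (z k))%:E.
Proof.
have [_ [_ [_ indep]]] := sample_iid.
pose A k (g : 'S_n) x := (s x, sstar x, g) = z k.
have A_meas k g : measurable (A k g).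
  have [->|g_neq] := eqVneq g (z k).2.
    rewrite (_ : A k _ = s @^-1` [set (z k).1.1] `&` sstar @^-1` [set (z k).1.2]).
      exact: measurableI.
    by apply/seteqP; split => x; rewrite /A; case: (z k) => [[a b] h] /=;
      [case=> -> -> | case=> -> ->].
  rewrite (_ : A k g = set0); first exact: measurable0.
  by apply/seteqP; split => x // zk; rewrite -zk eqxx in g_neq.
rewrite [X in P X](_ : _ = \bigcap_(k in [set: 'I_N]) [set w | A k (Sg k w) (X k w)]) //.
rewrite indep //; congr EFin; apply: eq_bigr => k _.
by rewrite -[[set w | _]]/(triple_event k (z k)) triple_event_prob.
Qed.

Definition prefers_sample (w : Omega) : Prop :=
  (\sum_k d_tau (s (X k w)) (Sg k w) <= \sum_k d_tau (sstar (X k w)) (Sg k w))%N.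

Definition prefers_triples (z : {ffun 'I_N -> triple n}) : bool :=
  (\sum_k d_tau (z k).1.1 (z k).2 <= \sum_k d_tau (z k).1.2 (z k).2)%N.

Lemma prefers_sampleE : prefers_sample
  = \big[setU/set0]_(z | prefers_triples z) \bigcap_(k in [set: 'I_N]) triple_event k (z k).
Proof.
rewrite -bigcup_seq_cond; apply/seteqP; split => w.
  move=> pref_w; exists [ffun k => sample_triple k w] => [|k _]; last by rewrite ffunE.
  by rewrite /= mem_index_enum /prefers_triples; under eq_bigr do rewrite ffunE;
    under [X in (_ <= X)%N]eq_bigr do rewrite ffunE.
case=> z /= /andP[_ pref_z] w_z; have zE k : sample_triple k w = z k := w_z k I.
move: pref_z; rewrite /prefers_triples; under eq_bigr do rewrite -zE.
by under [X in (_ <= X)%N -> _]eq_bigr do rewrite -zE.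
Qed.

Lemma triple_events_measurable (z : {ffun 'I_N -> triple n}) :
  measurable (\bigcap_(k in [set: 'I_N]) triple_event k (z k)).
Proof.
apply: fin_bigcap_measurable => [|k _]; first exact: finite_finset.
exact: triple_event_measurable.
Qed.

Lemma prefers_sample_measurable : measurable prefers_sample.
Proof.
rewrite prefers_sampleE; apply: bigsetU_measurable => z _.
exact: triple_events_measurable.
Qed.

Hypothesis p_sst : forall x, SST (p x).
Hypothesis sstarE : forall x (i : 'I_n),
  (sstar x i : nat) = #|[pred k : 'I_n | (k != i) && (pairp (p x) i k < 1/2)]|.
Variable H : R.
Hypothesis H_gt0 : 0 < H.
Hypothesis H_le : forall x (i j : 'I_n), (i < j)%N -> H <= `|pairp (p x) i j - 1/2|.
Hypothesis n_gt1 : (1 < n)%N.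

Local Notation W := (mgf_weight H).

Lemma sum_prefers_le :
  \sum_(z | prefers_triples z) \prod_k rho (z k) <= (\sum_v rho v * W v) ^+ N.
Proof.
have rho_W_ge0 v : 0 <= rho v * W v by rewrite mulr_ge0 ?joint_pmf_ge0 ?expR_ge0.
(* Markov: the weights multiply to at least 1 on configurations preferring s, and the
   sum over all configurations factorises. *)
have pref_W z : prefers_triples z -> 1 <= \prod_k W (z k).
  move=> pref_z; rewrite -expR_sum -[X in X <= _]expR0 ler_expR -mulr_sumr mulr_ge0 //.
    by rewrite divr_ge0 ?ler0n // ln_ge0 //; have := H_gt0; lra.
  by rewrite sumrB -!natr_sum subr_ge0 ler_nat.
apply: (le_trans (y := \sum_(z | prefers_triples z) \prod_k (rho (z k) * W (z k)))).
  apply: ler_sum => z pref_z; rewrite big_split /= ler_peMr ?pref_W //.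
  by apply: prodr_ge0 => k _; exact: joint_pmf_ge0.
apply: (le_trans (y := \sum_(z : {ffun 'I_N -> triple n}) \prod_k (rho (z k) * W (z k)))).
  rewrite [leRHS](bigID prefers_triples) /= lerDl.
  by apply: sumr_ge0 => z _; exact: prodr_ge0.
by rewrite -(bigA_distr_bigA (fun (k : 'I_N) v => rho v * W v)) /= prodr_const card_ord.
Qed.

Lemma prefers_sample_prob : (P prefers_sample
  <= (expR (- (N%:R * (H / (npairs n)%:R * (risk mu p s - risk mu p sstar)))))%:E)%E.
Proof.
rewrite prefers_sampleE; apply: le_trans (measure_bigsetU_le _ _ _ _) _.
  exact: triple_events_measurable.
apply: (le_trans (y := (\sum_(z | prefers_triples z) (\prod_k rho (z k))%:E)%E)).
  by apply: lee_sum => z _; rewrite -triple_events_prob.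
rewrite sumEFin lee_fin; apply: le_trans sum_prefers_le _.
set t := H / (npairs n)%:R * _.
have mgf_le : \sum_v rho v * W v <= 1 - t by exact: joint_mgf_le.
have mgf_ge0 : 0 <= \sum_v rho v * W v.
  by apply: sumr_ge0 => v _; rewrite mulr_ge0 ?joint_pmf_ge0 ?expR_ge0.
apply: le_trans (lerXn2r _ _ _ mgf_le) _; rewrite ?nnegrE //; first lra.
rewrite -[- (N%:R * t)]mulrN expRM_natl lerXn2r ?nnegrE ?expR_ge0 //; first lra.
by have := expR_ge1Dx (- t); lra.
Qed.

End SampleChernoff.

Lemma expR_tail_le (R : realType) (a N C delta Delta : R) :
  0 < a -> 0 < N -> 0 < C -> 0 < delta ->
  ln (C / delta) / (a * N) < Delta -> expR (- (N * (a * Delta))) <= delta / C.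
Proof.
move=> a_gt0 N_gt0 C_gt0 delta_gt0; rewrite ltr_pdivrMr ?mulr_gt0 // => lt_Delta.
have -> : delta / C = expR (- ln (C / delta)).
  by rewrite expRN lnK ?invf_div // posrE divr_gt0.
by rewrite ler_expR lerN2; lra.
Qed.

Lemma emp_risk_le_prefers (R : realType) n N dO (Omega : measurableType dO) d
    (T : measurableType d) (X : 'I_N -> Omega -> T) (Sg : 'I_N -> Omega -> 'S_n)
    (s t : T -> 'S_n) w :
  (0 < N)%N -> emp_risk (R := R) X Sg w s <= emp_risk (R := R) X Sg w t ->
  prefers_sample X Sg s t w.
Proof.
by move=> N_gt0; rewrite /emp_risk ler_pM2l ?invr_gt0 ?ltr0n // -!natr_sum ler_nat.
Qed.

Section FiniteClass.
Context (R : realType) (n N : nat) (dO : measure_display) (Omega : measurableType dO).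
Variable P : probability Omega R.
Context (d : measure_display) (T : measurableType d).
Variables (mu : probability T R) (p : T -> 'S_n -> R).
Variables (X : 'I_N -> Omega -> T) (Sg : 'I_N -> Omega -> 'S_n).
Hypothesis p_pmf : cond_pmf p.
Hypothesis sample_iid : iid_sample P mu p X Sg.
Hypothesis p_sst : forall x, SST (p x).
Variable sstar : T -> 'S_n.
Hypothesis sstar_meas : measurable_rule sstar.
Hypothesis sstarE : forall x (i : 'I_n),
  (sstar x i : nat) = #|[pred k : 'I_n | (k != i) && (pairp (p x) i k < 1/2)]|.
Variable H : R.
Hypothesis H_gt0 : 0 < H.
Hypothesis H_le : forall x (i j : 'I_n), (i < j)%N -> H <= `|pairp (p x) i j - 1/2|.
Hypothesis n_gt1 : (1 < n)%N.
Variables (C : nat) (f : 'I_C -> T -> 'S_n).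
Hypothesis f_meas : forall c, measurable_rule (f c).
Variable delta : R.
Hypothesis delta_gt0 : 0 < delta.

Definition excess_threshold : R := ln (C%:R / delta) / (H / (npairs n)%:R * N%:R).

Definition large_excess_event : set Omega :=
  \big[setU/set0]_(c | excess_threshold < risk mu p (f c) - risk mu p sstar)
    prefers_sample X Sg (f c) sstar.

Lemma large_excess_event_measurable : measurable large_excess_event.
Proof.
apply: bigsetU_measurable => c _.
exact (prefers_sample_measurable sample_iid (f_meas c) sstar_meas).
Qed.

Lemma large_excess_event_prob : (0 < N)%N -> (0 < C)%N ->
  ((1 - delta)%:E <= P (~` large_excess_event))%E.
Proof.
move=> N_gt0 C_gt0.
have -> : 1 - delta = 1 - #|'I_C|%:R * (delta / C%:R).
  by rewrite card_ord mulrC divfK // pnatr_eq0 -lt0n.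
apply: probability_setC_bigsetU_ge => [||c large_c]; first by rewrite divr_ge0 // ltW.
  by move=> c; exact (prefers_sample_measurable sample_iid (f_meas c) sstar_meas).
apply: le_trans (prefers_sample_prob p_pmf sample_iid (f_meas c) sstar_meas p_sst sstarE
  H_gt0 H_le n_gt1) _.
by rewrite lee_fin expR_tail_le ?divr_gt0 ?ltr0n ?npairs_gt0.
Qed.

Lemma excess_le_threshold c w :
  ~ large_excess_event w -> prefers_sample X Sg (f c) sstar w ->
  risk mu p (f c) - risk mu p sstar <= excess_threshold.
Proof.
move=> w_good w_pref; rewrite leNgt; apply/negP => large_c; apply: w_good.
by rewrite /large_excess_event -bigcup_seq_cond; exists c => //=; rewrite mem_index_enum.
Qed.

End FiniteClass.

Lemma minmargin_ge0 (R : realType) n (q : 'S_n -> R) : 0 <= minmargin q.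
Proof.
rewrite /minmargin; apply: (big_ind (fun v => 0 <= v)) => // [a b|i _].
  by move=> a_ge0 b_ge0; rewrite le_min a_ge0.
apply: (big_ind (fun v => 0 <= v)) => // a b a_ge0 b_ge0.
by rewrite le_min a_ge0.
Qed.

Lemma inf_minmargin_le (R : realType) n T (q : T -> 'S_n -> R) x (i j : 'I_n) :
  (i < j)%N -> inf (range (fun x => minmargin (q x))) <= `|pairp (q x) i j - 1/2|.
Proof.
move=> lt_ij; apply: (le_trans (y := minmargin (q x))).
  apply: ge_inf; last by exists x.
  by exists 0 => _ [y _ <-]; exact: minmargin_ge0.
rewrite /minmargin (bigD1 i) //= ge_min; apply/orP; left.
by rewrite (bigD1 j) //= ge_min lexx.
Qed.

Theorem proposition7 (R : realType) (n N C : nat)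
  (dO : measure_display) (Omega : measurableType dO) (P : probability Omega R)
  (d : measure_display) (T : measurableType d) (mu : probability T R)
  (p : T -> 'S_n -> R)
  (X : 'I_N -> Omega -> T) (Sg : 'I_N -> Omega -> 'S_n)
  (f : 'I_C -> (T -> 'S_n)) (sstar : T -> 'S_n) (shat : Omega -> (T -> 'S_n))
  (delta : R) :
  (0 < N)%N ->
  cond_pmf p ->
  iid_sample P mu p X Sg ->
  (forall x, SST (p x)) ->
  0 < inf (range (fun x => minmargin (p x))) ->
  (* S_0 = range f : a class of measurable rules of cardinality C *)
  injective f ->
  (forall c, measurable_rule (f c)) ->
  (* s^*(x) = sigma^*_{P_x}, given (0-based) by sigma^*(i) = #{k <> i | p_{i,k} < 1/2} *)
  (forall x (i : 'I_n), (sstar x i : nat) = #|[pred k : 'I_n | (k != i) && (pairp (p x) i k < 1/2)]|) ->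
  (exists c, f c = sstar) ->
  (* shat is an empirical risk minimizer over S_0 *)
  (forall w, exists c, shat w = f c) ->
  (forall w c, emp_risk (R:=R) X Sg w (shat w) <= emp_risk (R:=R) X Sg w (f c)) ->
  0 < delta < 1 ->
  exists E : set Omega, measurable E /\ (P E >= (1 - delta)%:E)%E /\
    forall w, E w ->
      risk mu p (shat w) - risk_star mu p
      <= ((n * (n - 1))%:R / (2 * inf (range (fun x => minmargin (p x)))))
         * (ln (C%:R / delta) / N%:R).
Proof.
move=> N_gt0 p_pmf iid p_sst H_gt0 _ f_meas sstarE [c0 f_c0] shat_f shat_erm.
move=> /andP[delta_gt0 delta_lt1]; have H_le := @inf_minmargin_le _ _ _ p.
set H := inf _ in H_gt0 H_le *; clearbody H.
have sstar_meas : measurable_rule sstar by rewrite -f_c0.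
rewrite (risk_starE mu p_pmf p_sst sstar_meas sstarE).
have [n_le1|n_gt1] := leqP n 1.
  exists setT; split; [exact: measurableT | split => [|w _]].
    by rewrite probability_setT lee_fin; lra.
  have -> : (n - 1 = 0)%N by apply/eqP; rewrite subn_eq0.
  by rewrite !risk_eq0 // muln0 !mul0r subrr.
have C_gt0 : (0 < C)%N := leq_ltn_trans (leq0n _) (ltn_ord c0).
exists (~` large_excess_event mu p X Sg sstar H f delta).
have E_meas := large_excess_event_measurable iid sstar_meas H f_meas delta.
split; first exact (measurableC E_meas).
split; first exact: large_excess_event_prob.
move=> w w_good; have [c shat_c] := shat_f w; rewrite shat_c.
have -> : (n * (n - 1))%:R / (2 * H) * (ln (C%:R / delta) / N%:R)
    = excess_threshold n N H C delta.
  rewrite /excess_threshold -npairs_double natrM; field.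
  by rewrite !pnatr_eq0 -!lt0n N_gt0 npairs_gt0 // gt_eqF.
apply: excess_le_threshold w_good _.
by apply: emp_risk_le_prefers => //; rewrite -shat_c -f_c0.
Qed.
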